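(* Let $p=f+\varepsilon g\in\mathbb{D}[t]$ ($f,g\in\mathbb{R}[t]$) be monic, and write $f=\prod_{i=1}^m N_i^{n_i}$ where $N_1,\dots,N_m\in\mathbb{R}[t]$ are pairwise coprime irreducible monic polynomials and $n_1,\dots,n_m$ are positive integers. Then $p$ can be written as a product of monic polynomials in $\mathbb{D}[t]$ each of whose primal parts is irreducible over $\mathbb{R}$ if and only if $\prod_{i=1}^m N_i^{n_i-1}$ divides $g$ in $\mathbb{R}[t]$.
   Context: $\mathbb{D}=\mathbb{R}[\varepsilon]/\langle\varepsilon^2\rangle$ denotes the dual numbers; every element of $\mathbb{D}[t]$ is uniquely $f+\varepsilon g$ with $f,g\in\mathbb{R}[t]$, where $f$ is called the primal part. A polynomial in $\mathbb{D}[t]$ is monic if its leading coefficient is $1$ (so $p=f+\varepsilon g$ monic means $f$ monic and $\deg g<\deg f$). *)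

From HB Require Import structures.
From mathcomp Require Import all_boot all_order all_algebra.
From mathcomp Require Export reals.
Set Implicit Arguments. Unset Strict Implicit. Unset Printing Implicit Defensive.
Import Order.TTheory GRing.Theory Num.Theory.
Local Open Scope ring_scope.

(* Polynomials over the dual numbers D = R[eps]/(eps^2), with coefficients in R.
   Every element of D[t] is uniquely f + eps g with f g in R[t]; we represent it
   by the pair (f, g) (primal part, dual part). *)
Definition dpoly (R : nzRingType) := ({poly R} * {poly R})%type.

Definition primal {R : nzRingType} (p : dpoly R) : {poly R} := p.1.
Definition dualpart {R : nzRingType} (p : dpoly R) : {poly R} := p.2.

(* (f1 + eps g1)(f2 + eps g2) = f1 f2 + eps (f1 g2 + g1 f2) *)
Definition dmul {R : comNzRingType} (p q : dpoly R) : dpoly R :=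
  (p.1 * q.1, p.1 * q.2 + p.2 * q.1).

Definition done_ {R : comNzRingType} : dpoly R := (1, 0).

Definition dprod {R : comNzRingType} (s : seq (dpoly R)) : dpoly R :=
  foldr dmul done_ s.

(* f + eps g is monic (leading coefficient 1) iff f is monic and deg g < deg f *)
Definition dmonic {R : comNzRingType} (p : dpoly R) : Prop :=
  p.1 \is monic /\ (size p.2 < size p.1)%N.

From mathcomp Require Import all_boot all_order all_algebra.
From mathcomp Require Import reals.
From mathcomp Require Import ring.
Import Order.TTheory GRing.Theory Num.Theory.
Local Open Scope ring_scope.

(* Write f = D * Rad with Rad = prod N_i (the radical of f) and
   D = prod N_i^(n_i - 1) (the defect).
   - Necessity: by the Leibniz rule, the dual part of a product of dual
     polynomials is divisible by any d such that d * a_k divides the primal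
     product for every primal factor a_k.  Each primal factor of a
     factorization of f + eps g is an irreducible divisor of f, hence
     divides some N_i, hence divides Rad; so D * a_k divides D * Rad = f,
     and D divides g.
   - Sufficiency: write g = h * D; comparing degrees, deg h < deg Rad.
     By induction on the list of indices, split h by Bezout as
     h = h' N_i + c * Rad' with deg c < deg N_i and deg h' < deg Rad', and
     factor the i-th block as (N_i + eps c) * N_i^(n_i - 1). *)

Section DualMonoid.
Context {R : comNzRingType}.
Implicit Types (p q : dpoly R) (s : seq (dpoly R)).

Lemma dmulA p1 p2 p3 : dmul p1 (dmul p2 p3) = dmul (dmul p1 p2) p3.
Proof. by case: p1 p2 p3 => [a b] [c d] [e f]; congr pair; rewrite /=; ring. Qed.

Lemma dmul1p p : dmul done_ p = p.
Proof. by case: p => a b; congr pair; rewrite /=; ring. Qed.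

Lemma dmulp1 p : dmul p done_ = p.
Proof. by case: p => a b; congr pair; rewrite /=; ring. Qed.

Lemma dprod_cat s1 s2 : dprod (s1 ++ s2) = dmul (dprod s1) (dprod s2).
Proof. by elim: s1 => [|q s1 IH] /=; rewrite ?dmul1p // IH dmulA. Qed.

End DualMonoid.

Section DualDivisibility.
Context {R : idomainType}.
Implicit Types (q : dpoly R) (s : seq (dpoly R)).

Lemma primal_factor_dvd s q : q \in s -> q.1 %| (dprod s).1.
Proof.
elim: s => [|q' s IH] //=; rewrite in_cons => /orP [/eqP ->|/IH q_dvd].
  exact: dvdp_mulIl.
exact: dvdp_mull.
Qed.

(* Leibniz rule in divisibility form: the dual part of a product is a sum of
   terms q.2 * (product of the other primal factors), so any d such that
   d * q.1 divides the primal product for every factor q divides it. *)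
Lemma dual_part_dvd s d :
  (forall q, q \in s -> q.1 != 0) ->
  (forall q, q \in s -> d * q.1 %| (dprod s).1) ->
  d %| (dprod s).2.
Proof.
move=> s_nz s_dvd.
suff gen : forall e, (forall q, q \in s -> d * q.1 %| e * (dprod s).1) ->
    d %| e * (dprod s).2.
  by rewrite -[_.2]mul1r; apply: gen => q /s_dvd; rewrite mul1r.
elim: s s_nz {s_dvd} => [|q s IH] s_nz e e_dvd /=; first by rewrite mulr0 dvdp0.
have q_nz : q.1 != 0 by apply: s_nz; rewrite mem_head.
have d_dvd_rest : d %| e * (dprod s).1.
  rewrite -(dvdp_mul2r _ _ q_nz) mulrAC -mulrA.
  by have := e_dvd q (mem_head _ _).
rewrite mulrDr; apply: dvdp_add.
  rewrite mulrA; apply: IH => [q' q's|q' q's].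
    by apply: s_nz; rewrite in_cons q's orbT.
  by rewrite -mulrA; apply: e_dvd; rewrite in_cons q's orbT.
by rewrite mulrCA; apply: dvdp_mull d_dvd_rest.
Qed.

End DualDivisibility.

Section Factorizable.
Context {R : idomainType}.

Definition dfactorizable (p : dpoly R) : Prop :=
  exists s : seq (dpoly R),
    (forall q, q \in s -> dmonic q /\ irreducible_poly (primal q))
    /\ dprod s = p.

Lemma dfactorizable_one : dfactorizable done_.
Proof. by exists [::]. Qed.

Lemma dfactorizable_irr q :
  dmonic q -> irreducible_poly q.1 -> dfactorizable q.
Proof.
move=> q_monic q_irr; exists [:: q]; rewrite /= dmulp1; split => //.
by move=> q'; rewrite inE => /eqP ->.
Qed.

Lemma dfactorizable_mul p1 p2 :
  dfactorizable p1 -> dfactorizable p2 -> dfactorizable (dmul p1 p2).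
Proof.
move=> [s1 [s1_irr <-]] [s2 [s2_irr <-]]; exists (s1 ++ s2).
split; last exact: dprod_cat.
by move=> q; rewrite mem_cat => /orP [/s1_irr|/s2_irr].
Qed.

Lemma dfactorizable_pure_power (a : {poly R}) k :
  a \is monic -> irreducible_poly a -> dfactorizable (a ^+ k, 0).
Proof.
move=> a_monic a_irr; elim: k => [|k IH]; first exact: dfactorizable_one.
have -> : (a ^+ k.+1, 0) = dmul (a, 0) (a ^+ k, 0).
  by congr pair; rewrite /= ?exprS; ring.
apply: dfactorizable_mul IH; apply: dfactorizable_irr => //.
by split; rewrite // size_poly0 size_poly_gt0 monic_neq0.
Qed.

End Factorizable.

Section PolynomialFacts.
Context {F : fieldType}.
Implicit Types (a b d h x y : {poly F}).

Lemma irreducible_dvd_prod_pow (I : eqType) (r : seq I)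
    (G : I -> {poly F}) (k : I -> nat) (q : {poly F}) :
  irreducible_poly q -> q %| \prod_(i <- r) G i ^+ k i ->
  exists2 i, i \in r & q %| G i.
Proof.
move=> q_irr; elim: r => [|i r IH].
  by rewrite big_nil dvdp1; case: q_irr => q_size _ /eqP q1; rewrite q1 in q_size.
rewrite big_cons; have [qG _|nqG] := boolP (q %| G i).
  by exists i; rewrite ?mem_head.
rewrite Gauss_dvdpr; last by rewrite coprimep_expr // irreducible_poly_coprime.
by case/IH=> j j_r qGj; exists j; rewrite // in_cons j_r orbT.
Qed.

Lemma ltn_size_mulr x y d :
  d != 0 -> (size (x * d)%R < size (y * d)%R)%N = (size x < size y)%N.
Proof. by move=> d_nz; rewrite -ltn_divpl // mulpK. Qed.

Lemma coprime_split {a b h} :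
  coprimep a b -> a != 0 -> b != 0 -> (size h < size (a * b)%R)%N ->
  exists h' c, [/\ h = h' * a + c * b,
                   (size c < size a)%N & (size h' < size b)%N].
Proof.
move=> ab_coprime a_nz b_nz h_size.
have [[u v] /= uv] := Bezout_eq1_coprimepP _ _ ab_coprime.
set c := (h * v) %% a; set h' := h * u + (h * v) %/ a * b.
have h_eq : h = h' * a + c * b.
  rewrite -[h in LHS]mulr1 -uv mulrDr [h * (v * b)]mulrA.
  by rewrite {1}(divp_eq (h * v) a) -/c /h'; ring.
exists h', c; split => //; first by rewrite ltn_modp.
have -> : h' = (h - c * b) %/ a by rewrite {1}h_eq addrK mulpK.
rewrite ltn_divpl //; apply: leq_ltn_trans (size_polyD _ _) _.
rewrite gtn_max size_polyN [b * a]mulrC h_size /=.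
by rewrite ltn_size_mulr // ltn_modp.
Qed.

End PolynomialFacts.

Section Multiplicities.
Context {F : fieldType} {I : eqType} (N : I -> {poly F}) (n : I -> nat).
Hypothesis N_monic : forall i, N i \is monic.
Hypothesis N_irr : forall i, irreducible_poly (N i).
Hypothesis N_coprime : forall i j, i != j -> coprimep (N i) (N j).
Hypothesis n_gt0 : forall i, (0 < n i)%N.
Implicit Types (r : seq I) (g h : {poly F}).

Definition power r := \prod_(i <- r) N i ^+ n i.
Definition radical r := \prod_(i <- r) N i.
Definition defect r := \prod_(i <- r) N i ^+ (n i).-1.

Lemma power_split r : power r = defect r * radical r.
Proof.
rewrite /power /defect /radical -big_split.
by apply: eq_bigr => i _ /=; rewrite -exprSr prednK.
Qed.

Lemma defect_neq0 r : defect r != 0.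
Proof. by apply/monic_neq0/monic_prod => i _; apply: monic_exp. Qed.

Lemma coprime_radical {i r} : i \notin r -> coprimep (N i) (radical r).
Proof.
elim: r => [|j r IH]; first by rewrite /radical big_nil coprimep1.
rewrite in_cons negb_or => /andP [ij /IH cop_r].
by rewrite /radical big_cons coprimepMr N_coprime.
Qed.

Lemma defect_dvd_dual r g : dfactorizable (power r, g) -> defect r %| g.
Proof.
move=> [s [s_irr s_prod]].
have primal_s : (dprod s).1 = power r by rewrite s_prod.
have -> : g = (dprod s).2 by rewrite s_prod.
apply: dual_part_dvd => q q_s; have [[q_monic _] q_irr] := s_irr q q_s.
  exact: monic_neq0.
have [i i_r q_Ni] : exists2 i, i \in r & q.1 %| N i.
  apply: (@irreducible_dvd_prod_pow _ _ r N n _ q_irr).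
  by rewrite -[X in _ %| X]/(power r) -primal_s; apply: primal_factor_dvd.
rewrite primal_s power_split; apply: dvdp_mul (dvdpp _) _.
by apply: dvdp_trans q_Ni _; rewrite /radical (big_rem i) //= dvdp_mulIl.
Qed.

Lemma dfactorizable_power r h :
  uniq r -> (size h < size (radical r))%N ->
  dfactorizable (power r, h * defect r).
Proof.
elim: r h => [|i r IH] h.
  rewrite /radical big_nil size_poly1 ltnS leqn0 size_poly_eq0 => _ /eqP ->.
  by rewrite mul0r /power big_nil; apply: dfactorizable_one.
rewrite cons_uniq => /andP [i_r r_uniq].
rewrite {1}/radical big_cons -/(radical r) => h_size.
have radical_nz : radical r != 0 by apply/monic_neq0/monic_prod.
have [h' [c [h_eq c_size h'_size]]] :=
  coprime_split (coprime_radical i_r) (monic_neq0 (N_monic i)) radical_nz h_size.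
have -> : (power (i :: r), h * defect (i :: r)) =
    dmul (dmul (N i, c) (N i ^+ (n i).-1, 0)) (power r, h' * defect r).
  rewrite /power /defect !big_cons -/(power r) -/(defect r) power_split h_eq.
  by rewrite -{1}(prednK (n_gt0 i)) exprS; congr pair; rewrite /=; ring.
apply: dfactorizable_mul; last exact: IH.
apply: dfactorizable_mul; last exact: dfactorizable_pure_power.
exact: (@dfactorizable_irr _ (N i, c) (conj (N_monic i) c_size) (N_irr i)).
Qed.

End Multiplicities.

Theorem lemma4 (R : realType) (f g : {poly R}) (m : nat)
    (N : 'I_m -> {poly R}) (n : 'I_m -> nat) :
  dmonic (f, g) ->
  (forall i, N i \is monic) ->
  (forall i, irreducible_poly (N i)) ->
  (forall i j, i != j -> coprimep (N i) (N j)) ->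
  (forall i, (0 < n i)%N) ->
  f = \prod_(i < m) N i ^+ n i ->
  ((exists s : seq (dpoly R),
      (forall q, q \in s -> dmonic q /\ irreducible_poly (primal q))
      /\ dprod s = (f, g))
   <-> (\prod_(i < m) N i ^+ (n i).-1 %| g)).
Proof.
move=> [_ g_size] N_monic N_irr N_coprime n_gt0 f_def.
(* the products over 'I_m are [power], [defect] over the list [index_enum] *)
have f_power : f = power N n (index_enum 'I_m) by [].
split; first by rewrite f_power; apply: defect_dvd_dual.
case/dvdpP=> h g_def; rewrite f_power g_def.
apply: dfactorizable_power => //; first exact: index_enum_uniq.
have defect_nz := defect_neq0 N n N_monic (index_enum 'I_m).
rewrite -(ltn_size_mulr _ _ _ defect_nz) [radical _ _ * _]mulrC -power_split //.
by rewrite -f_power -g_def.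
Qed.
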